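(* Let $R$ be a commutative ring and $S$ a multiplicative subset of $R$ consisting of non-zero-divisors. Then $R$ is a $u$-$S$-semisimple ring if and only if $R$ is a semisimple ring.
   Context: An $R$-module $T$ is $u$-$S$-torsion if $sT=0$ for some $s\in S$. A sequence $M\xrightarrow{f}N\xrightarrow{g}L$ is $u$-$S$-exact at $N$ if there is $s\in S$ with $s\,\mathrm{Ker}(g)\subseteq\mathrm{Im}(f)$ and $s\,\mathrm{Im}(f)\subseteq\mathrm{Ker}(g)$; a short sequence $0\to A\xrightarrow{f}B\to C\to0$ is $u$-$S$-exact if $u$-$S$-exact at each term, and $u$-$S$-split if there exist $s\in S$ and $h:B\to A$ with $h\circ f=s\,\mathrm{Id}_A$. An $R$-module $M$ is $u$-$S$-semisimple if every $u$-$S$-exact sequence $0\to A\to M\to C\to0$ is $u$-$S$-split; $R$ is a $u$-$S$-semisimple ring if every free $R$-module is $u$-$S$-semisimple. *)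

From HB Require Import structures.
From mathcomp Require Import all_boot all_order all_algebra.
Set Implicit Arguments. Unset Strict Implicit. Unset Printing Implicit Defensive.
Import GRing.Theory.
Local Open Scope ring_scope.

Definition multiplicative_subset (R : comPzRingType) (S : R -> Prop) : Prop :=
  S 1 /\ (forall a b, S a -> S b -> S (a * b)).

Definition nonzerodivisors (R : comPzRingType) (S : R -> Prop) : Prop :=
  forall s, S s -> forall r : R, s * r = 0 -> r = 0.

Definition uS_exact_at (R : comPzRingType) (S : R -> Prop)
    (M N L : lmodType R) (f : M -> N) (g : N -> L) : Prop :=
  exists2 s, S s &
    (forall x : N, g x = 0 -> exists y : M, f y = s *: x) /\
    (forall y : M, g (s *: f y) = 0).

Notation zmod0 R := ('rV[R]_0).

Definition uS_short_exact (R : comPzRingType) (S : R -> Prop)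
    (A B C : lmodType R) (f : {linear A -> B}) (g : {linear B -> C}) : Prop :=
  [/\ uS_exact_at S (fun _ : zmod0 R => (0 : A)) f,
      uS_exact_at S f g &
      uS_exact_at S g (fun _ : C => (0 : zmod0 R))].

Definition uS_split (R : comPzRingType) (S : R -> Prop)
    (A B : lmodType R) (f : {linear A -> B}) : Prop :=
  exists2 s, S s & exists h : {linear B -> A}, forall a, h (f a) = s *: a.

Definition uS_semisimple_module (R : comPzRingType) (S : R -> Prop)
    (M : lmodType R) : Prop :=
  forall (A C : lmodType R) (f : {linear A -> M}) (g : {linear M -> C}),
    uS_short_exact S f g -> uS_split S f.

Definition free_module (R : comPzRingType) (M : lmodType R) : Prop :=
  exists (I : eqType) (b : I -> M),
    (forall x : M, exists (s : seq I) (c : I -> R),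
        x = \sum_(i <- s) c i *: b i) /\
    (forall (s : seq I) (c : I -> R), uniq s ->
        \sum_(i <- s) c i *: b i = 0 -> forall i, i \in s -> c i = 0).

Definition uS_semisimple_ring (R : comPzRingType) (S : R -> Prop) : Prop :=
  forall M : lmodType R, free_module M -> uS_semisimple_module S M.

Definition submodule (R : comPzRingType) (M : lmodType R) (N : M -> Prop) : Prop :=
  [/\ N 0, (forall x y, N x -> N y -> N (x + y)) &
      (forall (r : R) x, N x -> N (r *: x))].

Definition semisimple_module (R : comPzRingType) (M : lmodType R) : Prop :=
  forall N : M -> Prop, submodule N ->
    exists2 K : M -> Prop, submodule K &
      (forall x, N x -> K x -> x = 0) /\
      (forall x, exists a b, [/\ N a, K b & x = a + b]).

Definition semisimple_ring (R : comPzRingType) : Prop :=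
  semisimple_module R^o.

(* Over a semisimple ring every module is injective: by Zorn's lemma a maximal
   partial linear map (encoded as its graph) exists, and it is total because the
   ideal of scalars r with r m in its domain is generated by an idempotent-like
   unit e, so m can be adjoined by sending it to the image of e m.  Hence
   f a |-> s a, well defined since s kills Ker f, extends to h with h o f = s Id.
   Conversely, for an ideal N split the u-S-exact sequence
   0 -> (+)_t tN -> R^(R) -> quotient -> 0.  The s-th coordinate of h(delta_s) is
   s e with e in N, and comparing s-th coordinates of h((s n) delta_s) gives
   s s n e = s s n; cancelling the non-zero-divisor s, e is a unit for N, whence
   R = N (+) Ann(e). *)

From HB Require Import structures.
From mathcomp Require Import all_boot all_order all_algebra ring_quotient.
From mathcomp Require Import boolp functions classical_sets ring.
Set Implicit Arguments. Unset Strict Implicit. Unset Printing Implicit Defensive.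
Import GRing.Theory.
Local Open Scope ring_scope.

Section LinearOf.
Variables (R : comPzRingType) (M A : lmodType R) (h : M -> A).
Hypothesis h_lin : forall r x y, h (r *: x + y) = r *: h x + h y.

Definition linear_of := h.
HB.instance Definition _ :=
  GRing.isLinear.Build R M A *:%R linear_of (fun r x y => h_lin r x y).

Lemma exists_linear_of : exists hl : {linear M -> A}, hl =1 h.
Proof. by exists linear_of. Qed.

End LinearOf.

Section SubmoduleStructures.
Local Open Scope quotient_scope.
Variables (R : comPzRingType) (V : lmodType R) (P : V -> Prop) (HP : submodule P).

(* The unused proof argument keys the canonical [submodClosed] instance below. *)
Definition submod_pred (_ : submodule P) : {pred V} := fun x => `[< P x >].
Local Notation kP := (submod_pred HP).

Lemma submod_predP x : reflect (P x) (x \in kP).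
Proof. exact: asboolP. Qed.

Lemma submod_pred_closed : subsemimod_closed kP.
Proof.
case: HP => P0 PD PZ; split; [split|].
- exact/submod_predP.
- by move=> x y /submod_predP Px /submod_predP Py; apply/submod_predP/PD.
- by move=> r x /submod_predP Px; apply/submod_predP/PZ.
Qed.

HB.instance Definition _ := GRing.isSubmodClosed.Build R V kP submod_pred_closed.

Definition submod_type := {x : V | x \in kP}.
HB.instance Definition _ := [isSub of submod_type for @sval V (fun x => x \in kP)].
HB.instance Definition _ := [Choice of submod_type by <:].
HB.instance Definition _ := [SubChoice_isSubLmodule of submod_type by <:].

Definition submod_elem x (Px : P x) : submod_type := Sub x (introT (submod_predP x) Px).

Definition submod_incl : {linear submod_type -> V} := val.

Local Notation quotmod_type := (Quotient.quot kP).

Definition quot_scale (r : R) := lift_op1 quotmod_type ( *:%R r).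

Lemma pi_scale r x : \pi_quotmod_type (r *: x) = quot_scale r (\pi x).
Proof.
unlock quot_scale; apply/eqP; rewrite -Quotient.idealrBE -scalerBr rpredZ //.
by rewrite Quotient.idealrBE reprK.
Qed.

Lemma quot_scaleA a b q : quot_scale a (quot_scale b q) = quot_scale (a * b) q.
Proof. by rewrite -[q]reprK -!pi_scale scalerA. Qed.

Lemma quot_scale1 : left_id 1 quot_scale.
Proof. by move=> q; rewrite -[q]reprK -pi_scale scale1r. Qed.

Lemma quot_scaleDr : right_distributive quot_scale +%R.
Proof.
by move=> r p q; rewrite -[p]reprK -[q]reprK -raddfD -!pi_scale scalerDr raddfD.
Qed.

Lemma quot_scaleDl q : {morph quot_scale^~ q : a b / a + b}.
Proof. by move=> a b; rewrite -[q]reprK -!pi_scale scalerDl raddfD. Qed.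

HB.instance Definition _ := GRing.Zmodule_isLmodule.Build R quotmod_type
  quot_scaleA quot_scale1 quot_scaleDr quot_scaleDl.

Definition quot_proj (x : V) : quotmod_type := \pi x.

Lemma quot_proj_lin : linear quot_proj.
Proof. by move=> r x y; rewrite /quot_proj raddfD; congr (_ + _); apply: pi_scale. Qed.

HB.instance Definition _ := GRing.isLinear.Build R V quotmod_type *:%R quot_proj quot_proj_lin.

Lemma quot_proj_eq0P x : reflect (P x) (quot_proj x == 0).
Proof.
by rewrite -(raddf0 \pi_quotmod_type) -Quotient.idealrBE subr0; apply: submod_predP.
Qed.

End SubmoduleStructures.

Section LinearGraph.
Local Open Scope classical_set_scope.
Variables (R : comPzRingType) (M A : lmodType R).
Implicit Types G : set (M * A).

Definition linear_graph G :=
  [/\ (forall x a y b, G (x, a) -> G (y, b) -> G (x + y, a + b)),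
      (forall r x a, G (x, a) -> G (r *: x, r *: a)) &
      (forall a, G (0, a) -> a = 0)].

Lemma linear_graphN G x a : linear_graph G -> G (x, a) -> G (- x, - a).
Proof. by case=> _ GZ _ /(GZ (-1)); rewrite !scaleN1r. Qed.

Lemma linear_graph_functional G x a b :
  linear_graph G -> G (x, a) -> G (x, b) -> a = b.
Proof.
move=> Glin Gxa /(linear_graphN Glin) Gxb; case: Glin => GD _ G0.
by apply/eqP; rewrite -subr_eq0; apply/eqP/G0; rewrite -(subrr x); apply: GD.
Qed.

Lemma linear_graph_bigcup (F : set (set (M * A))) :
  F `<=` linear_graph -> total_on F subset -> linear_graph (\bigcup_(X in F) X).
Proof.
move=> Flin Ftot; split.
- move=> x a y b [X FX Xxa] [Y FY Yyb].
  have [XY|YX] := Ftot X Y FX FY.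
  + by exists Y => //; case: (Flin Y FY) => YD _ _; apply: YD (XY _ Xxa) Yyb.
  + by exists X => //; case: (Flin X FX) => XD _ _; apply: XD Xxa (YX _ Yyb).
- move=> r x a [X FX Xxa]; exists X => //.
  by case: (Flin X FX) => _ XZ _; apply: XZ.
- by move=> a [X FX Xa]; case: (Flin X FX) => _ _; apply.
Qed.

Lemma linear_graph_maximal G0 : linear_graph G0 ->
  exists G, [/\ linear_graph G, G0 `<=` G &
    forall G', linear_graph G' -> G `<=` G' -> G' `<=` G].
Proof.
move=> G0lin.
(* [set0] is admitted so that the empty chain has an upper bound *)
pose P G := linear_graph G /\ (G = set0 \/ G0 `<=` G).
have chainP F : F `<=` P -> total_on F subset -> P (\bigcup_(X in F) X).
  move=> FP Ftot; split; first by apply: linear_graph_bigcup => // X /FP[].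
  have [[X FX G0X]|noG0] := pselect (exists2 X, F X & G0 `<=` X).
    by right; apply: subset_trans G0X _; apply: bigcup_sup.
  left; apply/seteqP; split => // p [X FX Xp].
  have [_ [X0|G0X]] := FP X FX; first by rewrite X0 in Xp.
  by case: noG0; exists X.
have [G [[Glin G0_or] Gmax]] := Zorn_bigcup chainP.
have G0G : G0 `<=` G.
  case: G0_or => // Gset0; apply: contrapT => nG0G.
  by apply: (Gmax G0); split => //; [rewrite Gset0 | right].
exists G; split => // G' G'lin GG'; apply: contrapT => nG'G.
by apply: (Gmax G') => //; split => //; right; apply: subset_trans GG'.
Qed.

Lemma linear_graph_adjoin G m e ae :
  linear_graph G -> G (e *: m, ae) -> (forall r a, G (r *: m, a) -> r * e = r) ->
  linear_graph [set p | exists x a r, G (x, a) /\ p = (x + r *: m, a + r *: ae)].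
Proof.
move=> Glin Gm eunit; have [GD GZ Gfun] := Glin; split.
- move=> _ _ _ _ [x1 [a1 [r1 [G1 [-> ->]]]]] [x2 [a2 [r2 [G2 [-> ->]]]]].
  exists (x1 + x2), (a1 + a2), (r1 + r2); split; first exact: GD.
  by rewrite !scalerDl; congr pair; rewrite addrACA.
- move=> r _ _ [x [a [r1 [Gxa [-> ->]]]]].
  exists (r *: x), (r *: a), (r * r1); split; first exact: GZ Gxa.
  by rewrite !scalerDr !scalerA.
- move=> _ [x [a [r [Gxa [x_rm0 ->]]]]].
  have rmx : r *: m = - x by apply/eqP; rewrite -addr_eq0 addrC -x_rm0.
  have re : r * e = r by apply: (eunit _ (- a)); rewrite rmx; apply: linear_graphN.
  have := GZ r _ _ Gm; rewrite scalerA re => Grm.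
  by apply: Gfun; rewrite x_rm0; apply: GD.
Qed.

End LinearGraph.

Definition complemented (R : comPzRingType) (M : lmodType R) (N : M -> Prop) :=
  exists2 K : M -> Prop, submodule K &
    (forall x, N x -> K x -> x = 0) /\
    (forall x, exists a b, [/\ N a, K b & x = a + b]).

Lemma complemented_idealP (R : comPzRingType) (I : R^o -> Prop) :
  submodule I -> complemented I <-> exists2 e, I e & forall r, I r -> r * e = r.
Proof.
case=> I0 ID IZ; split.
- move=> [K [_ _ KZ] [IK IKsum]]; have [e [k [Ie Kk e_k]]] := IKsum 1.
  exists e => // r Ir; have rk0 : r * k = 0.
    by apply: IK; [rewrite mulrC; apply: IZ | apply: KZ].
  by rewrite -[in RHS](mulr1 r) e_k mulrDr rk0 addr0.
- move=> [e Ie eunit]; exists (fun x : R^o => x * e = 0).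
    split; first by rewrite mul0r.
    + by move=> x y xe ye; rewrite mulrDl xe ye addr0.
    + by move=> r x xe; rewrite -[r *: x]/(r * x) -mulrA xe mulr0.
  split; first by move=> x Ix xe; rewrite -(eunit x Ix).
  move=> x; exists (x * e), (x - x * e); split; first exact: IZ.
    by rewrite mulrBl -mulrA (eunit e Ie) subrr.
  by rewrite addrC subrK.
Qed.

Section SemisimpleInjective.
Local Open Scope classical_set_scope.
Variables (R : comPzRingType) (M A : lmodType R).
Hypothesis R_semisimple : semisimple_ring R.
Implicit Types G : set (M * A).

Lemma maximal_linear_graph_total G :
  linear_graph G -> G (0, 0) ->
  (forall G', linear_graph G' -> G `<=` G' -> G' `<=` G) ->
  forall m, exists a, G (m, a).
Proof.
move=> Glin G00 Gmax m; have [GD GZ _] := Glin.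
pose I (r : R^o) := exists a, G (r *: m, a).
have I_submod : submodule I.
  split; first by exists 0; rewrite scale0r.
  - by move=> r1 r2 [a1 G1] [a2 G2]; exists (a1 + a2); rewrite scalerDl; apply: GD.
  - by move=> r x [a Gxa]; exists (r *: a); rewrite -scalerA; apply: GZ.
have [e [ae Gem] eunit] := (complemented_idealP I_submod).1 (R_semisimple I_submod).
have G'lin := linear_graph_adjoin Glin Gem (fun r a Gra => eunit r (ex_intro _ a Gra)).
exists ae; apply: (Gmax _ G'lin).
  by move=> [x a] Gxa; exists x, a, 0; rewrite !scale0r !addr0.
by exists 0, 0, 1; rewrite !add0r !scale1r.
Qed.

Lemma total_linear_graph G : linear_graph G -> (forall m, exists a, G (m, a)) ->
  exists h : {linear M -> A}, forall m a, G (m, a) -> h m = a.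
Proof.
move=> Glin Gtotal; pose h m := projT1 (cid (Gtotal m)).
have Gh m : G (m, h m) by rewrite /h; case: cid.
have [GD GZ _] := Glin.
have h_lin r x y : h (r *: x + y) = r *: h x + h y.
  by apply: linear_graph_functional Glin (Gh _) _; apply: GD (GZ _ _ _ (Gh x)) (Gh y).
have [hl hlE] := exists_linear_of h_lin.
by exists hl => m a Gma; rewrite hlE; apply: linear_graph_functional Glin (Gh m) Gma.
Qed.

Lemma semisimple_linear_graph_extension G0 : linear_graph G0 -> G0 (0, 0) ->
  exists h : {linear M -> A}, forall m a, G0 (m, a) -> h m = a.
Proof.
move=> G0lin G000; have [G [Glin G0G Gmax]] := linear_graph_maximal G0lin.
have [h hG] := total_linear_graph Glin
  (maximal_linear_graph_total Glin (G0G _ G000) Gmax).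
by exists h => m a /G0G; apply: hG.
Qed.

End SemisimpleInjective.

Lemma semisimple_ring_uS_semisimple_module (R : comPzRingType) (S : R -> Prop)
    (M : lmodType R) :
  semisimple_ring R -> uS_semisimple_module S M.
Proof.
move=> R_ss A C f g [[s Ss [f_ker _]] _ _]; exists s => //.
pose G0 (p : M * A) := exists a, p = (f a, s *: a).
have G0lin : linear_graph G0.
  split.
  - move=> _ _ _ _ [a1 [-> ->]] [a2 [-> ->]].
    by exists (a1 + a2); rewrite raddfD scalerDr.
  - move=> r _ _ [a [-> ->]]; exists (r *: a).
    by rewrite linearZ_LR !scalerA mulrC.
  - by move=> _ [a [/esym/f_ker [y <-] ->]].
have G000 : G0 (0, 0) by exists 0; rewrite linear0 scaler0.
have [h hG0] := semisimple_linear_graph_extension R_ss G0lin G000.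
by exists h => a; apply: hG0; exists a.
Qed.

Lemma submod_uS_short_exact (R : comPzRingType) (S : R -> Prop) (V : lmodType R)
    (P : V -> Prop) (HP : submodule P) :
  S 1 -> uS_short_exact S (submod_incl HP) (quot_proj HP).
Proof.
move=> S1; split; exists 1 => //; split.
- by move=> x /= x0; exists 0; rewrite scale1r; apply: val_inj.
- by move=> y; rewrite scaler0 linear0.
- by move=> x /eqP/quot_proj_eq0P Px; exists (submod_elem HP Px); rewrite scale1r.
- by move=> y; rewrite scale1r; apply/eqP/quot_proj_eq0P/(submod_predP HP)/valP.
- by move=> c _; exists (repr c); rewrite scale1r; apply: reprK.
- by [].
Qed.

Section FiniteSupport.
Variables (R : comPzRingType) (I : eqType).

Definition finsupp (x : I -> R^o) := exists s : seq I, forall t, t \notin s -> x t = 0.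

Lemma finsupp_submodule : submodule finsupp.
Proof.
split; first by exists [::].
- move=> x y [sx x0] [sy y0]; exists (sx ++ sy) => t.
  by rewrite mem_cat negb_or => /andP[/x0 xt0 /y0 yt0]; rewrite !fctE /= xt0 yt0 addr0.
- by move=> r x [sx x0]; exists sx => t /x0 xt0; rewrite !fctE /= xt0 scaler0.
Qed.

Definition finsupp_module := submod_type finsupp_submodule.

Lemma finsupp_addE (x y : finsupp_module) t : val (x + y) t = val x t + val y t.
Proof. by []. Qed.

Lemma finsupp_scaleE r (x : finsupp_module) t : val (r *: x) t = r * val x t.
Proof. by []. Qed.

Definition delta_fun (t : I) : I -> R^o := fun u => (u == t)%:R.

Lemma finsupp_delta_fun t : delta_fun t \in submod_pred finsupp_submodule.
Proof. by apply/submod_predP; exists [:: t] => u; rewrite inE /delta_fun => /negbTE ->. Qed.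

Definition finsupp_delta t : finsupp_module := Sub (delta_fun t) (finsupp_delta_fun t).

Lemma sum_delta_fun (s : seq I) (c : I -> R) u : uniq s ->
  (\sum_(i <- s) c i *: delta_fun i) u = if u \in s then c u else 0.
Proof.
rewrite fct_sumE /= => s_uniq; case: ifPn => [us|/negbTE us].
  rewrite (bigD1_seq u) //= [X in _ + X]big1_seq ?addr0 => [|i /andP[iu _]].
    by rewrite !fctE /delta_fun eqxx mulr1n; apply: mulr1.
  by rewrite !fctE /delta_fun eq_sym (negbTE iu) scaler0.
rewrite big1_seq // => i /andP[_ i_s]; rewrite !fctE /delta_fun.
have /negbTE -> : u != i by apply: contraFneq us => ->.
by rewrite scaler0.
Qed.

Lemma free_finsupp_module : free_module finsupp_module.
Proof.
exists I, finsupp_delta; split.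
- move=> x; have /submod_predP [sx x0] := valP x.
  exists (undup sx), (val x); apply: val_inj; rewrite raddf_sum /=.
  apply: funext => u; rewrite sum_delta_fun ?undup_uniq // mem_undup.
  by case: ifPn => // /x0.
- move=> s c s_uniq /(congr1 val); rewrite raddf_sum /= => sum0 i i_s.
  by have := congr1 (fun x => x i) sum0; rewrite sum_delta_fun // i_s.
Qed.

End FiniteSupport.

Lemma nonzerodivisors_mulI (R : comPzRingType) (S : R -> Prop) s :
  nonzerodivisors S -> S s -> injective ( *%R s).
Proof.
move=> S_nzd Ss a b sab; apply/eqP; rewrite -subr_eq0; apply/eqP.
by apply: (S_nzd s Ss); rewrite mulrBr sab subrr.
Qed.

Section SplitIdeal.
Variables (R : comPzRingType) (S : R -> Prop) (N : R^o -> Prop).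
Hypotheses (S_nzd : nonzerodivisors S) (N_submod : submodule N).
Local Notation F := (finsupp_module R R).

Definition coord_multiples (x : F) := forall t, exists2 n, N n & val x t = t * n.

Lemma coord_multiples_submodule : submodule coord_multiples.
Proof.
case: N_submod => N0 ND NZ; split.
- by move=> t; exists 0; rewrite ?mulr0.
- move=> x y xN yN t; have [n1 Nn1 xt] := xN t; have [n2 Nn2 yt] := yN t.
  by exists (n1 + n2); [apply: ND | rewrite finsupp_addE xt yt mulrDr].
- move=> r x xN t; have [n Nn xt] := xN t.
  by exists (r * n); [apply: NZ | rewrite finsupp_scaleE xt mulrCA].
Qed.

Lemma uS_split_coord_multiples :
  uS_split S (submod_incl coord_multiples_submodule) ->
  exists2 e, N e & forall n, N n -> n * e = n.
Proof.
move=> [s Ss [h hE]]; pose d := finsupp_delta R s.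
have /submod_predP /(_ s) [e Ne hd] := valP (h d).
exists e => // n Nn.
have sn_d : coord_multiples ((s * n) *: d).
  case: N_submod => N0 _ _ t; rewrite finsupp_scaleE /= /delta_fun.
  case: (eqVneq t s) => [->|ts]; first by exists n; rewrite // mulr1n mulr1.
  by exists 0; rewrite ?mulr0n ?mulr0.
have snse : s * n * (s * e) = s * n * (s * 1).
  have := congr1 (fun a => val (val a) s) (hE (submod_elem _ sn_d)).
  rewrite /= !linearZ /= !fctE /=; change (sval (sval (h d)) s) with (val (val (h d)) s).
  by rewrite hd /delta_fun eqxx mulr1n.
apply: (nonzerodivisors_mulI S_nzd Ss); apply: (nonzerodivisors_mulI S_nzd Ss).
have -> : s * (s * (n * e)) = s * n * (s * e) by ring.
by rewrite snse; ring.
Qed.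

End SplitIdeal.

Theorem proposition3p8 (R : comPzRingType) (S : R -> Prop) :
  multiplicative_subset S -> nonzerodivisors S ->
  (uS_semisimple_ring S <-> semisimple_ring R).
Proof.
move=> [S1 _] S_nzd; split => [R_uSss N N_submod | R_ss M _].
- apply/(complemented_idealP N_submod).
  apply: (uS_split_coord_multiples S_nzd).
  apply: (R_uSss _ (free_finsupp_module R R)).
  exact: submod_uS_short_exact.
- exact: semisimple_ring_uS_semisimple_module.
Qed.
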